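(* Let $N>0$, $m>0$, $F>0$, $\alpha>0$ be fixed with $Nm>\alpha$, and for $g\geq 0$, $\tau\in(0,1)$, $L_g\geq 0$ define \[ L=\frac{N\left[(1-\tau)(mL_g+\alpha F)+(mg+F)mN\right]}{\alpha+(Nm-\alpha)\tau},\qquad q=\frac{(1-\tau)(L+L_g-\alpha g)}{\left(Nm+\alpha(1-\tau)\right)(L+L_g)}, \] regarded as functions of $(g,\tau,L_g)$. Then \[ \frac{\partial q}{\partial g}<0,\qquad \frac{\partial q}{\partial \tau}<0,\qquad \frac{\partial q}{\partial L_g}\geq 0 . \]
   Context: $L$ is equilibrium private employment and $q$ equilibrium per-capita consumption of each variety in a monopolistic-competition general equilibrium model with a measure $N$ of firms, marginal and fixed labor inputs $m$ and $F$, CARA utility parameter $\alpha$, income tax rate $\tau$, government purchase $g$ of each variety, and government employment $L_g$. Partial derivatives are taken in $(g,\tau,L_g)$ with other parameters fixed. *)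

From Stdlib Require Import Reals.
From Coquelicot Require Import Coquelicot.
Open Scope R_scope.

Definition Lemp (N m F alpha : R) (g tau Lg : R) : R :=
  N * ((1 - tau) * (m * Lg + alpha * F) + (m * g + F) * m * N)
  / (alpha + (N * m - alpha) * tau).

Definition qcons (N m F alpha : R) (g tau Lg : R) : R :=
  let L := Lemp N m F alpha g tau Lg in
  (1 - tau) * (L + Lg - alpha * g)
  / ((N * m + alpha * (1 - tau)) * (L + Lg)).

From Stdlib Require Import Reals Lra.
From Coquelicot Require Import Coquelicot.
Open Scope R_scope.

(* With total employment S = L + L_g, consumption factors as
   q = (1 - tau) / (N m + alpha (1 - tau)) * (S - alpha g) / S.
   L is affine in g and in L_g with positive slopes, and S - g dS/dg is the
   value of S at g = 0, which is positive: hence dq/dg < 0 and dq/dL_g >= 0.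
   In tau, the prefactor decreases, S decreases (because N m > alpha) and
   alpha g < L keeps (S - alpha g) / S positive: hence dq/dtau < 0. *)

Lemma is_derive_affine (b c x : R) : is_derive (fun t => b + t * c) x c.
Proof. auto_derive; [exact I | ring]. Qed.

Lemma is_derive_mult_ratio (u S a : R -> R) (x du dS da : R) :
  is_derive u x du -> is_derive S x dS -> is_derive a x da -> S x <> 0 ->
  is_derive (fun y => u y * ((S y - a y) / S y)) x
    (du * ((S x - a x) / S x) + u x * ((a x * dS - da * S x) / S x ^ 2)).
Proof.
  intros Hu HS Ha HS0.
  pose proof (is_derive_div _ _ x _ _ (is_derive_minus _ _ _ _ _ HS Ha) HS HS0) as Hratio.
  replace ((a x * dS - da * S x) / S x ^ 2)
    with (((dS - da) * S x - (S x - a x) * dS) / S x ^ 2) by (field; exact HS0).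
  exact (is_derive_mult _ _ x _ _ Hu Hratio Rmult_comm).
Qed.

Section Equilibrium.

Variables N m F alpha : R.
Hypothesis hN : 0 < N.
Hypothesis hm : 0 < m.
Hypothesis hF : 0 < F.
Hypothesis halpha : 0 < alpha.
Hypothesis hNm : alpha < N * m.

Let L := Lemp N m F alpha.
Let Ltot (g tau Lg : R) := L g tau Lg + Lg.
Let Lemp_denom (tau : R) := alpha + (N * m - alpha) * tau.
Let tax_factor (tau : R) := (1 - tau) / (N * m + alpha * (1 - tau)).

Lemma Lemp_denom_bounds (tau : R) :
  0 <= tau <= 1 -> alpha <= Lemp_denom tau <= N * m.
Proof. intros; unfold Lemp_denom; nra. Qed.

Lemma tax_factor_pos (tau : R) : 0 <= tau < 1 -> 0 < tax_factor tau.
Proof. intros; unfold tax_factor; apply Rdiv_lt_0_compat; nra. Qed.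

Lemma Lemp_affine_g (g tau Lg : R) :
  L g tau Lg = L 0 tau Lg + g * (N * N * m * m / Lemp_denom tau).
Proof. unfold L, Lemp, Lemp_denom, Rdiv; ring. Qed.

Lemma Lemp_affine_Lg (g tau Lg : R) :
  L g tau Lg = L g tau 0 + Lg * (N * (1 - tau) * m / Lemp_denom tau).
Proof. unfold L, Lemp, Lemp_denom, Rdiv; ring. Qed.

Lemma Lemp_pos (g tau Lg : R) :
  0 <= g -> 0 <= tau <= 1 -> 0 <= Lg -> 0 < L g tau Lg.
Proof.
  intros hg htau hLg.
  pose proof (Lemp_denom_bounds tau htau) as hD.
  unfold L, Lemp, Lemp_denom in *.
  apply Rdiv_lt_0_compat; [|lra].
  apply Rmult_lt_0_compat; [lra|].
  assert (0 <= (1 - tau) * (m * Lg + alpha * F)) by (apply Rmult_le_pos; nra).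
  assert (0 < (m * g + F) * m * N) by (apply Rmult_lt_0_compat; [|lra]; nra).
  lra.
Qed.

Lemma Lemp_gt_alpha_g (g tau Lg : R) :
  0 <= g -> 0 <= tau <= 1 -> 0 <= Lg -> alpha * g < L g tau Lg.
Proof.
  intros hg htau hLg.
  pose proof (Lemp_denom_bounds tau htau) as hD.
  pose proof (Lemp_pos 0 tau Lg (Rle_refl 0) htau hLg).
  assert (alpha <= N * N * m * m / Lemp_denom tau).
  { apply Rmult_le_reg_r with (Lemp_denom tau); [lra|].
    unfold Rdiv; rewrite Rmult_assoc, Rinv_l by lra; nra. }
  rewrite Lemp_affine_g; nra.
Qed.

Lemma is_derive_Ltot_g (g tau Lg : R) :
  is_derive (fun x => Ltot x tau Lg) g (N * N * m * m / Lemp_denom tau).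
Proof.
  apply is_derive_ext
    with (fun x => (L 0 tau Lg + Lg) + x * (N * N * m * m / Lemp_denom tau)).
  - intro x; unfold Ltot; rewrite (Lemp_affine_g x); lra.
  - apply is_derive_affine.
Qed.

Lemma is_derive_Ltot_Lg (g tau Lg : R) :
  is_derive (fun x => Ltot g tau x) Lg (N * (1 - tau) * m / Lemp_denom tau + 1).
Proof.
  apply is_derive_ext
    with (fun x => L g tau 0 + x * (N * (1 - tau) * m / Lemp_denom tau + 1)).
  - intro x; unfold Ltot; rewrite (Lemp_affine_Lg g tau x); lra.
  - apply is_derive_affine.
Qed.

Lemma is_derive_Ltot_tau (g tau Lg : R) : 0 <= tau <= 1 ->
  is_derive (fun t => Ltot g t Lg) tau
    (- (N * (m * Lg + alpha * F) + L g tau Lg * (N * m - alpha)) / Lemp_denom tau).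
Proof.
  intros htau.
  pose proof (Lemp_denom_bounds tau htau) as hD.
  unfold Ltot, L, Lemp, Lemp_denom in *; auto_derive.
  - lra.
  - field; lra.
Qed.

Lemma is_derive_tax_factor (tau : R) : 0 <= tau <= 1 ->
  is_derive tax_factor tau (- (N * m) / (N * m + alpha * (1 - tau)) ^ 2).
Proof.
  intros htau.
  assert (0 < N * m + alpha * (1 - tau)) by nra.
  unfold tax_factor; auto_derive.
  - lra.
  - field; lra.
Qed.

Lemma qcons_factorization (g tau Lg : R) :
  qcons N m F alpha g tau Lg
  = tax_factor tau * ((Ltot g tau Lg - alpha * g) / Ltot g tau Lg).
Proof. unfold qcons, tax_factor, Ltot, L, Rdiv; rewrite Rinv_mult; ring. Qed.

Lemma is_derive_qcons_g_neg (g tau Lg : R) :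
  0 <= g -> 0 <= tau < 1 -> 0 <= Lg ->
  exists d, is_derive (fun x => qcons N m F alpha x tau Lg) g d /\ d < 0.
Proof.
  intros hg htau hLg.
  assert (htau' : 0 <= tau <= 1) by lra.
  pose proof (Lemp_pos 0 tau Lg (Rle_refl 0) htau' hLg).
  pose proof (Lemp_pos g tau Lg hg htau' hLg).
  eexists; split.
  - apply is_derive_ext
      with (fun x => tax_factor tau * ((Ltot x tau Lg - alpha * x) / Ltot x tau Lg)).
    { intro x; symmetry; apply qcons_factorization. }
    apply (is_derive_mult_ratio (fun _ => tax_factor tau) (fun x => Ltot x tau Lg)
             (fun x => alpha * x)).
    + apply is_derive_const.
    + apply is_derive_Ltot_g.
    + apply is_derive_scal, is_derive_id.
    + unfold Ltot; lra.
  - assert (hS : Ltot g tau Lg - g * (N * N * m * m / Lemp_denom tau) = Ltot 0 tau Lg)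
      by (unfold Ltot; rewrite (Lemp_affine_g g); ring).
    change zero with 0; change one with 1.
    rewrite Rmult_0_l, Rplus_0_l, Rmult_1_r.
    apply Rmult_pos_neg; [apply tax_factor_pos, htau|].
    apply Rdiv_neg_pos; [|apply pow_lt; unfold Ltot; lra].
    unfold Ltot in *; nra.
Qed.

Lemma is_derive_qcons_tau_neg (g tau Lg : R) :
  0 <= g -> 0 <= tau < 1 -> 0 <= Lg ->
  exists d, is_derive (fun t => qcons N m F alpha g t Lg) tau d /\ d < 0.
Proof.
  intros hg htau hLg.
  assert (htau' : 0 <= tau <= 1) by lra.
  pose proof (Lemp_denom_bounds tau htau').
  pose proof (Lemp_pos g tau Lg hg htau' hLg).
  pose proof (Lemp_gt_alpha_g g tau Lg hg htau' hLg).
  pose proof (tax_factor_pos tau htau).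
  eexists; split.
  - apply is_derive_ext
      with (fun t => tax_factor t * ((Ltot g t Lg - alpha * g) / Ltot g t Lg)).
    { intro t; symmetry; apply qcons_factorization. }
    apply (is_derive_mult_ratio tax_factor (fun t => Ltot g t Lg) (fun _ => alpha * g)).
    + apply is_derive_tax_factor, htau'.
    + apply is_derive_Ltot_tau, htau'.
    + apply is_derive_const.
    + unfold Ltot; lra.
  - change zero with 0; rewrite Rmult_0_l, Rminus_0_r.
    set (S := Ltot g tau Lg).
    set (dS := - (N * (m * Lg + alpha * F) + L g tau Lg * (N * m - alpha))
               / Lemp_denom tau).
    assert (hS : alpha * g < S) by (unfold S, Ltot; lra).
    assert (hS0 : 0 < S) by nra.
    assert (hdS : dS < 0).
    { apply Rdiv_neg_pos; [|lra].
      assert (0 < N * (m * Lg + alpha * F)) by (apply Rmult_lt_0_compat; nra).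
      nra. }
    assert (- (N * m) / (N * m + alpha * (1 - tau)) ^ 2 * ((S - alpha * g) / S) < 0).
    { apply Rmult_neg_pos.
      - apply Rdiv_neg_pos; [nra | apply pow_lt; nra].
      - apply Rdiv_lt_0_compat; lra. }
    assert (tax_factor tau * (alpha * g * dS / S ^ 2) <= 0).
    { assert (0 < / S ^ 2) by (apply Rinv_0_lt_compat, pow_lt; lra).
      assert (0 <= alpha * g) by nra.
      assert (alpha * g * dS <= 0) by nra.
      assert (alpha * g * dS / S ^ 2 <= 0) by (unfold Rdiv; nra).
      nra. }
    lra.
Qed.

Lemma is_derive_qcons_Lg_nonneg (g tau Lg : R) :
  0 <= g -> 0 <= tau < 1 -> 0 <= Lg ->
  exists d, is_derive (fun x => qcons N m F alpha g tau x) Lg d /\ 0 <= d.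
Proof.
  intros hg htau hLg.
  assert (htau' : 0 <= tau <= 1) by lra.
  pose proof (Lemp_denom_bounds tau htau').
  pose proof (Lemp_pos g tau Lg hg htau' hLg).
  pose proof (tax_factor_pos tau htau).
  eexists; split.
  - apply is_derive_ext
      with (fun x => tax_factor tau * ((Ltot g tau x - alpha * g) / Ltot g tau x)).
    { intro x; symmetry; apply qcons_factorization. }
    apply (is_derive_mult_ratio (fun _ => tax_factor tau) (fun x => Ltot g tau x)
             (fun _ => alpha * g)).
    + apply is_derive_const.
    + apply is_derive_Ltot_Lg.
    + apply is_derive_const.
    + unfold Ltot; lra.
  - change zero with 0; rewrite !Rmult_0_l, Rminus_0_r, Rplus_0_l.
    assert (0 < N * (1 - tau) * m / Lemp_denom tau) by (apply Rdiv_lt_0_compat; nra).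
    assert (0 < / Ltot g tau Lg ^ 2) by (apply Rinv_0_lt_compat, pow_lt; unfold Ltot; lra).
    assert (0 <= alpha * g) by nra.
    apply Rmult_le_pos; [lra|].
    unfold Rdiv; apply Rmult_le_pos; [apply Rmult_le_pos|]; lra.
Qed.

End Equilibrium.

Theorem theorem2 (N m F alpha : R)
  (hN : 0 < N) (hm : 0 < m) (hF : 0 < F) (halpha : 0 < alpha)
  (hNm : alpha < N * m)
  (g tau Lg : R) (hg : 0 <= g) (htau0 : 0 < tau) (htau1 : tau < 1)
  (hLg : 0 <= Lg) :
  (exists d, is_derive (fun x => qcons N m F alpha x tau Lg) g d /\ d < 0) /\
  (exists d, is_derive (fun x => qcons N m F alpha g x Lg) tau d /\ d < 0) /\
  (exists d, is_derive (fun x => qcons N m F alpha g tau x) Lg d /\ 0 <= d).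
Proof.
  assert (htau : 0 <= tau < 1) by lra.
  split; [|split].
  - apply is_derive_qcons_g_neg; assumption.
  - apply is_derive_qcons_tau_neg; assumption.
  - apply is_derive_qcons_Lg_nonneg; assumption.
Qed.
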